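(* Let $K\subseteq\mathbb{R}^m$ be closed, $f:\mathbb{R}^n\to\mathbb{R}$ and $G:\mathbb{R}^n\to\mathbb{R}^m$ be locally Lipschitz continuous and second-order directionally differentiable at $x^*$, and let $x^*$ be a locally optimal solution of the problem $\min f(x)$ s.t. $G(x)\in K$, with feasible set $\Psi=\{x:G(x)\in K\}$. Then: (i) for every $d\in\mathcal{T}_\Psi(x^* )$ with $f'(x^*;d)\le0$ and all $w\in\mathcal{T}^2_\Psi(x^*;d)$, one has $f''(x^*;d,w)\ge0$; (ii) if MSCQ for $\Psi$ holds at $x^*$, then for every $d\in\mathcal{C}(x^* ):=\{d\in\mathbb{R}^n: G'(x^*;d)\in\mathcal{T}_K(G(x^* )),\ f'(x^*;d)\le0\}$ and all $w\in\mathbb{R}^n$ satisfying $G''(x^*;d,w)\in\mathcal{T}^2_K(G(x^* );G'(x^*;d))$, one has $f''(x^*;d,w)\ge0$.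
   Context: Definitions. For $g:\mathbb{R}^n\to\mathbb{R}^k$: $g'(x;d)=\lim_{t\downarrow0}(g(x+td)-g(x))/t$; $g$ is second-order directionally differentiable at $x$ if for every $d$, $g'(x;d)$ exists and $g''(x;d,w):=\lim_{t\downarrow0}\frac{g(x+td+\frac12t^2w)-g(x)-tg'(x;d)}{\frac12t^2}$ exists for all $w$. For a set $C$ and $x^*\in C$: tangent cone $\mathcal{T}_C(x^* )=\{d:\exists t_k\downarrow0,d^k\to d,x^*+t_kd^k\in C\}$; outer second-order tangent set $\mathcal{T}^2_C(x^*;d)=\{w:\exists t_k\downarrow0,w^k\to w,x^*+t_kd+\frac12t_k^2w^k\in C\}$. MSCQ for $\Psi$ holds at $x^*$ if there exist a neighborhood $U$ of $x^*$ and $\kappa>0$ with $\mathrm{dist}(x,\Psi)\le\kappa\,\mathrm{dist}(G(x),K)$ for all $x\in U$. *)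

From HB Require Import structures.
From mathcomp Require Import all_boot all_order all_algebra.
From mathcomp Require Import all_classical all_reals all_analysis.
Set Implicit Arguments. Unset Strict Implicit. Unset Printing Implicit Defensive.
Import Order.TTheory GRing.Theory Num.Theory.
Import numFieldNormedType.Exports.
Local Open Scope classical_set_scope.
Local Open Scope ring_scope.

Section Defs.
Context {R : realType}.

Definition dir_deriv {U V : normedModType R} (g : U -> V) (x d : U) (l : V) :=
  (fun t : R => t^-1 *: (g (x + t *: d) - g x)) @ 0^'+ --> l.

Definition second_dir_deriv {U V : normedModType R} (g : U -> V) (x d : U)
    (g1d : V) (w : U) (l : V) :=
  (fun t : R => ((2^-1 * t ^+ 2)^-1) *:
     (g (x + t *: d + (2^-1 * t ^+ 2) *: w) - g x - t *: g1d)) @ 0^'+ --> l.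

(* g is second-order directionally differentiable at x, with g'(x;.) = g1
   and g''(x;.,.) = g2 *)
Definition sodd {U V : normedModType R} (g : U -> V) (x : U)
    (g1 : U -> V) (g2 : U -> U -> V) :=
  forall d, dir_deriv g x d (g1 d) /\
    forall w, second_dir_deriv g x d (g1 d) w (g2 d w).

Definition locally_lipschitz {U V : normedModType R} (g : U -> V) :=
  forall x0 : U, exists2 r : R, 0 < r & exists L : R, forall x y,
    `|x - x0| < r -> `|y - x0| < r -> `|g x - g y| <= L * `|x - y|.

Definition tangent_cone {U : normedModType R} (C : set U) (x d : U) :=
  exists (t : nat -> R) (dk : nat -> U),
    [/\ forall k, 0 < t k, t @ \oo --> 0, dk @ \oo --> d
      & forall k, C (x + t k *: dk k)].

Definition second_tangent_set {U : normedModType R} (C : set U) (x d w : U) :=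
  exists (t : nat -> R) (wk : nat -> U),
    [/\ forall k, 0 < t k, t @ \oo --> 0, wk @ \oo --> w
      & forall k, C (x + t k *: d + (2^-1 * t k ^+ 2) *: wk k)].

Definition dist_set {U : normedModType R} (x : U) (A : set U) : R :=
  inf [set `|x - y| | y in A].

Definition MSCQ {U V : normedModType R} (G : U -> V) (K : set V) (xs : U) :=
  exists U0 : set U, nbhs xs U0 /\ exists2 kappa : R, 0 < kappa &
    forall x, U0 x ->
      dist_set x [set y | K (G y)] <= kappa * dist_set (G x) K.

Definition local_min {U V : normedModType R} (f : U -> R) (G : U -> V)
    (K : set V) (xs : U) :=
  K (G xs) /\ \forall x \near xs, K (G x) -> f xs <= f x.

End Defs.

From HB Require Import structures.
From mathcomp Require Import all_boot all_order all_algebra.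
From mathcomp Require Import all_classical all_reals all_analysis.
From mathcomp Require Import lra.
Import Order.TTheory GRing.Theory Num.Theory.
Import numFieldNormedType.Exports.
Local Open Scope classical_set_scope.
Local Open Scope ring_scope.

(* Let x_k = xs + t_k d + (t_k^2/2) w_k be feasible with t_k -> 0+ and
   w_k -> w.  Local optimality gives f(x_k) >= f(xs), and replacing w_k by w
   changes f by at most L (t_k^2/2) |w_k - w|; since t_k f'(xs;d) <= 0, the
   second-order difference quotient of f along (d, w) at t_k is bounded below
   by -L |w_k - w| -> 0, which gives (i).  For (ii), the point
   z_k = xs + t_k d + (t_k^2/2) w satisfies
   dist(G(z_k), K) <= (t_k^2/2) |q_k - v_k|, where q_k -> G''(xs;d,w) is the
   second-order quotient of G and v_k -> G''(xs;d,w) witnesses the tangency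
   to K; by MSCQ some feasible y_k lies within o(t_k^2) of z_k, so
   w_k = w + (y_k - z_k) / (t_k^2/2) shows w in T^2_Psi(xs;d), and (i)
   applies. *)

Section ParabolicArcs.
Context {R : realType}.

Lemma cvg_pos_at_right {t : nat -> R} :
  (forall k, 0 < t k) -> t @ \oo --> 0 -> t @ \oo --> (0 : R)^'+.
Proof.
move=> t_gt0 t0 A /t0; apply: (@filterS _ \oo) => k; apply; exact: t_gt0.
Qed.

Lemma halfsqr_gt0 {t : R} : 0 < t -> 0 < 2^-1 * t ^+ 2.
Proof. by move=> t_gt0; rewrite mulr_gt0 ?invr_gt0 ?exprn_gt0. Qed.

Context {U : normedModType R}.

(* The arcs of [second_dir_deriv] and [second_tangent_set] unfold to this. *)
Definition parabola (x d : U) (t : R) (v : U) : U :=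
  x + t *: d + (2^-1 * t ^+ 2) *: v.

Lemma parabolaB x d t u v :
  parabola x d t u - parabola x d t v = (2^-1 * t ^+ 2) *: (u - v).
Proof. by rewrite /parabola opprD addrACA subrr add0r scalerBr. Qed.

Lemma cvg_parabola x d {t : nat -> R} {v : nat -> U} {v0 : U} :
  t @ \oo --> 0 -> v @ \oo --> v0 ->
  (fun k => parabola x d (t k) (v k)) @ \oo --> x.
Proof.
move=> t0 vv0.
suff: (fun k => parabola x d (t k) (v k)) @ \oo --> parabola x d 0 v0.
  by rewrite /parabola expr0n mulr0 !scale0r !addr0.
apply: cvgD; first apply: cvgD; [exact: cvg_cst | by apply: cvgZ => //; exact: cvg_cst |].
by apply: cvgZ => //; apply: cvgM; [exact: cvg_cst | by rewrite expr2; exact: cvgM].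
Qed.

End ParabolicArcs.

Section SecondOrderQuotient.
Context {R : realType} {U V : normedModType R}.

Definition second_quotient (g : U -> V) (x d : U) (g1d : V) (w : U) (t : R) :=
  (2^-1 * t ^+ 2)^-1 *: (g (parabola x d t w) - g x - t *: g1d).

Lemma second_dir_deriv_seq {g : U -> V} {x d g1d w l} {t : nat -> R} :
  second_dir_deriv g x d g1d w l -> (forall k, 0 < t k) -> t @ \oo --> 0 ->
  (fun k => second_quotient g x d g1d w (t k)) @ \oo --> l.
Proof. by move=> g2 t_gt0 t0; apply: cvg_comp (cvg_pos_at_right t_gt0 t0) g2. Qed.

Lemma parabola_second_quotient (g : U -> V) x d g1d w t v : 0 < t ->
  g (parabola x d t w) - parabola (g x) g1d t v =
  (2^-1 * t ^+ 2) *: (second_quotient g x d g1d w t - v).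
Proof.
move=> t_gt0; rewrite /second_quotient scalerBr scalerA.
rewrite mulfV ?gt_eqF ?halfsqr_gt0 // scale1r /parabola.
by rewrite !opprD !addrA.
Qed.

End SecondOrderQuotient.

Section DistanceToSet.
Context {R : realType} {U : normedModType R}.

Lemma dist_set_le (x y : U) (A : set U) : A y -> dist_set x A <= `|x - y|.
Proof. by move=> Ay; apply: ge_inf; [exists 0 => _ [z _ <-] | exists y]. Qed.

Lemma dist_set_approx (x : U) {A : set U} {e : R} : A !=set0 -> 0 < e ->
  exists2 y, A y & `|x - y| < dist_set x A + e.
Proof.
move=> [y0 Ay0] e_gt0.
have A_inf : has_inf [set `|x - y| | y in A].
  by split; [exists `|x - y0|, y0 | exists 0 => _ [y _ <-]].
by have [_ [y Ay <-] ?] := inf_adherent e_gt0 A_inf; exists y.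
Qed.

End DistanceToSet.

Lemma locally_lipschitz_cvg {R : realType} {U V : normedModType R}
    {f : U -> V} (x0 : U) :
  locally_lipschitz f -> exists L : R, forall u v : nat -> U,
    u @ \oo --> x0 -> v @ \oo --> x0 ->
    \forall k \near \oo, `|f (u k) - f (v k)| <= L * `|u k - v k|.
Proof.
move=> /(_ x0) [r r_gt0 [L Lip]]; exists L => u v ux0 vx0.
near=> k; apply: Lip; rewrite distrC; near: k; exact: cvgr_dist_lt.
Unshelve. all: end_near.
Qed.

Section SecondOrderNecessity.
Context {R : realType} {U : normedModType R}.

Lemma second_quotient_ge (f : U -> R) (x d u w : U) (f1d t L : R) :
  0 < t -> f1d <= 0 -> f x <= f (parabola x d t u) ->
  `|f (parabola x d t u) - f (parabola x d t w)| <=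
    L * `|parabola x d t u - parabola x d t w| ->
  - L * `|u - w| <= second_quotient f x d f1d w t.
Proof.
move=> t_gt0 f1d_le0 fx_le lip.
have a_gt0 := halfsqr_gt0 t_gt0.
rewrite parabolaB normrZ gtr0_norm // in lip.
have tf1d_le0 : t *: f1d <= 0 by rewrite pmulr_rle0.
have := ler_norm (f (parabola x d t u) - f (parabola x d t w)).
rewrite /second_quotient [_ *: _]/= ler_pdivlMl //.
by move: lip fx_le tf1d_le0; nra.
Qed.

Lemma second_order_necessary (f : U -> R) (Psi : set U) (xs d w : U)
    (f1d l : R) :
  locally_lipschitz f -> (\forall x \near xs, Psi x -> f xs <= f x) ->
  second_dir_deriv f xs d f1d w l -> f1d <= 0 ->
  second_tangent_set Psi xs d w -> 0 <= l.
Proof.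
move=> /(locally_lipschitz_cvg xs) [L Lip] xs_min f2 f1d_le0.
move=> [t [wk [t_gt0 t0 wk_w Psi_k]]].
have xk_xs := cvg_parabola xs d t0 wk_w.
have zk_xs : (fun k => parabola xs d (t k) w) @ \oo --> xs.
  by apply: cvg_parabola t0 _; exact: cvg_cst.
have lb_0 : (fun k => - L * `|wk k - w|) @ \oo --> (0 : R).
  rewrite -(mulr0 (- L)) -(normr0 U) -(subrr w).
  by apply: cvgM; [exact: cvg_cst | apply: cvg_norm; apply: cvgB => //; exact: cvg_cst].
apply: ler_cvg_to lb_0 (second_dir_deriv_seq f2 t_gt0 t0) _.
near=> k; apply: second_quotient_ge (t_gt0 k) f1d_le0 _ _.
  by move: (Psi_k k); near: k; exact: (xk_xs _ xs_min).
by near: k; exact: Lip.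
Unshelve. all: end_near.
Qed.

End SecondOrderNecessity.

Section MetricSubregularity.
Context {R : realType} {U V : normedModType R}.

Lemma MSCQ_second_tangent_set (G : U -> V) (K : set V) (xs d w : U)
    (G1d G2dw : V) :
  MSCQ G K xs -> K (G xs) -> second_dir_deriv G xs d G1d w G2dw ->
  second_tangent_set K (G xs) G1d G2dw ->
  second_tangent_set [set x | K (G x)] xs d w.
Proof.
move=> [U0 [U0_xs [kappa kappa_gt0 mscq]]] KGxs G2 [t [vk [t_gt0 t0 vk_v K_k]]].
set Psi := [set x | K (G x)].
pose a k := 2^-1 * t k ^+ 2.
have a_gt0 k : 0 < a k := halfsqr_gt0 (t_gt0 k).
pose xk k := parabola xs d (t k) w.
have /choice [yk yk_spec] : forall k, exists y,
    Psi y /\ `|xk k - y| < dist_set (xk k) Psi + a k * t k.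
  move=> k; have Psi_xs : Psi !=set0 by exists xs.
  have [y Psi_y y_near] := dist_set_approx (xk k) Psi_xs (mulr_gt0 (a_gt0 k) (t_gt0 k)).
  by exists y.
pose ck k := (a k)^-1 *: (yk k - xk k).
pose qk k := second_quotient G xs d G1d w (t k).
have ck_bound : \forall k \near \oo, 0 <= `|ck k| <= kappa * `|qk k - vk k| + t k.
  have xk_U0 : \forall k \near \oo, U0 (xk k).
    by apply: cvg_parabola t0 _ _ U0_xs; exact: cvg_cst.
  near=> k; rewrite normr_ge0 /=.
  have dist_GK : dist_set (G (xk k)) K <= a k * `|qk k - vk k|.
    rewrite -[a k]gtr0_norm // -normrZ -parabola_second_quotient //.
    exact: dist_set_le (K_k k).
  have [_ yk_near] := yk_spec k.
  have U0_k : U0 (xk k) by near: k; exact: xk_U0.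
  have mscq_k := mscq _ U0_k.
  rewrite /ck normrZ normrV ?unitfE ?gt_eqF // gtr0_norm // distrC.
  rewrite ler_pdivrMl //.
  by move: yk_near mscq_k (ler_wpM2l (ltW kappa_gt0) dist_GK) (a_gt0 k) (t_gt0 k); nra.
have ck_0 : ck @ \oo --> 0.
  apply: norm_cvg0; apply: squeeze_cvgr ck_bound _ (cvg_cst 0) _.
  have -> : 0 = kappa * `|G2dw - G2dw| + 0 :> R by rewrite subrr normr0 mulr0 addr0.
  apply: cvgD (t0); apply: cvgM; first exact: cvg_cst.
  by apply: cvg_norm; apply: cvgB vk_v; exact: second_dir_deriv_seq G2 t_gt0 t0.
exists t, (fun k => w + ck k); split => //.
  by rewrite -[X in _ --> X]addr0; apply: cvgD => //; exact: cvg_cst.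
move=> k; rewrite -/(a k) scalerDr scalerA mulfV ?gt_eqF // scale1r addrA.
by rewrite -/(xk k) subrKC; case: (yk_spec k).
Unshelve. all: end_near.
Qed.

End MetricSubregularity.

Theorem theorem3p2 (R : realType) (n m : nat) (K : set 'rV[R]_m)
  (f : 'rV[R]_n -> R) (G : 'rV[R]_n -> 'rV[R]_m) (xs : 'rV[R]_n)
  (f1 : 'rV[R]_n -> R) (f2 : 'rV[R]_n -> 'rV[R]_n -> R)
  (G1 : 'rV[R]_n -> 'rV[R]_m) (G2 : 'rV[R]_n -> 'rV[R]_n -> 'rV[R]_m) :
  closed K ->
  locally_lipschitz f -> locally_lipschitz G ->
  sodd f xs f1 f2 -> sodd G xs G1 G2 ->
  local_min f G K xs ->
  (forall d, tangent_cone [set x | K (G x)] xs d -> f1 d <= 0 ->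
     forall w, second_tangent_set [set x | K (G x)] xs d w -> 0 <= f2 d w)
  /\
  (MSCQ G K xs ->
   forall d, tangent_cone K (G xs) (G1 d) -> f1 d <= 0 ->
     forall w, second_tangent_set K (G xs) (G1 d) (G2 d w) -> 0 <= f2 d w).
Proof.
move=> _ f_lip _ f_sodd G_sodd [KGxs xs_min].
have necessary d w : f1 d <= 0 ->
    second_tangent_set [set x | K (G x)] xs d w -> 0 <= f2 d w.
  exact: second_order_necessary f_lip xs_min (proj2 (f_sodd d) w).
split=> [d _ f1d_le0 w | mscq d _ f1d_le0 w G2_tangent].
  exact: necessary.
apply: necessary f1d_le0 _.
exact: MSCQ_second_tangent_set mscq KGxs (proj2 (G_sodd d) w) G2_tangent.
Qed.
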